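(* For every (possibly open) term $t$ with $k\notin\mathrm{fv}(t)$, $t\;(\approx^p_\emptyset)^{\circ}\;\mathcal Sk.(k\,t)$.
   Context: Terms of $\lambda_S$: $t ::= x \mid \lambda x.t \mid t\,t \mid \mathcal{S}k.t \mid \langle t\rangle$ (shift binds $k$; $\langle\cdot\rangle$ reset), up to $\alpha$-conversion; $\mathrm{fv}(t)$ free variables. Values $v::=\lambda x.t$. Pure contexts $E ::= \Box \mid v\,E \mid E\,t$; evaluation contexts $F ::= \Box \mid v\,F \mid F\,t \mid \langle F\rangle$. Reduction: $F[(\lambda x.t)v]\to F[t\{v/x\}]$; $F[\langle E[\mathcal Sk.t]\rangle]\to F[\langle t\{\lambda x.\langle E[x]\rangle/k\}\rangle]$ ($x\notin\mathrm{fv}(E)$); $F[\langle v\rangle]\to F[v]$; $\to^*$ reflexive-transitive closure. Program: term $\langle t\rangle$ (ranged over by $p$). Closures: for $R$ a relation on closed terms, $\widetilde R$ is the smallest relation containing $R$, all $(x,x)$, closed under all term constructors, restricted to closed terms; $\widehat R$ is the smallest relation on closed evaluation contexts with $\Box\widehat R\Box$, $v_0F_0\widehat Rv_1F_1$ if $F_0\widehat RF_1,v_0\widetilde Rv_1$; $F_0t_0\widehat RF_1t_1$ if $F_0\widehat RF_1,t_0\widetilde Rt_1$; $\langle F_0\rangle\widehat R\langle F_1\rangle$ if $F_0\widehat RF_1$. Environmental bisimilarity for programs: an environment $\mathcal E$ is a relation on closed values; an environmental relation $\mathcal X$ is a set of environments and triples $(\mathcal E,t_0,t_1)$, $t_0,t_1$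 closed, written $t_0\mathcal X_{\mathcal E}t_1$. $\mathcal X$ is an environmental bisimulation for programs if (1) if $t_0\mathcal X_{\mathcal E}t_1$ and $t_0,t_1$ are not both programs, then for all pure $E_0\widehat{\mathcal E}E_1$, $\langle E_0[t_0]\rangle\mathcal X_{\mathcal E}\langle E_1[t_1]\rangle$; (2) if $p_0\mathcal X_{\mathcal E}p_1$: (a) $p_0\to p_0'$ (program) implies $p_1\to^*p_1'$ (program) with $p_0'\mathcal X_{\mathcal E}p_1'$; (b) $p_0\to v_0$ implies $p_1\to^*v_1$ and $\{(v_0,v_1)\}\cup\mathcal E\in\mathcal X$; (c) symmetric conditions; (3) for $\mathcal E\in\mathcal X$, $(\lambda x.t_0)\mathcal E(\lambda x.t_1)$ and $v_0\widetilde{\mathcal E}v_1$ imply $t_0\{v_0/x\}\mathcal X_{\mathcal E}t_1\{v_1/x\}$. $\approx^p$ is the largest such relation; $t_0\approx^p_{\emptyset}t_1$ means $(\emptyset,t_0,t_1)\in\approx^p$. Open extension: for terms $t_0,t_1$ with $\vec x=\mathrm{fv}(t_0)\cup\mathrm{fv}(t_1)$, $t_0\,(\approx^p_\emptyset)^\circ\,t_1$ iff $\lambda\vec x.t_0\approx^p_\emptyset\lambda\vec x.t_1$, where $\lambda\vec x.t$ abstracts the variables of $\vec x$ in succession. *)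

From mathcomp Require Import all_boot.
Set Implicit Arguments. Unset Strict Implicit. Unset Printing Implicit Defensive.

(* Terms of lambda_S, de Bruijn indices (alpha-conversion is built in).
   Lam t binds index 0 in t; Shift t binds k = index 0 in t. *)
Inductive term : Type :=
| Var of nat
| Lam of term
| App of term & term
| Shift of term
| Reset of term.

Fixpoint tlift (d c : nat) (t : term) : term :=
  match t with
  | Var i => if c <= i then Var (i + d) else Var i
  | Lam t => Lam (tlift d c.+1 t)
  | App a b => App (tlift d c a) (tlift d c b)
  | Shift t => Shift (tlift d c.+1 t)
  | Reset t => Reset (tlift d c t)
  end.

Fixpoint subst (n : nat) (u : term) (t : term) : term :=
  match t with
  | Var i => if i < n then Var i else if i == n then tlift n 0 u else Var i.-1
  | Lam t => Lam (subst n.+1 u t)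
  | App a b => App (subst n u a) (subst n u b)
  | Shift t => Shift (subst n.+1 u t)
  | Reset t => Reset (subst n u t)
  end.

(* t{v/x} where x is the binder of the enclosing abstraction *)
Definition subst0 (v t : term) : term := subst 0 v t.

Fixpoint fv (t : term) : seq nat :=
  match t with
  | Var i => [:: i]
  | Lam t => [seq i.-1 | i <- fv t & i != 0]
  | App a b => fv a ++ fv b
  | Shift t => [seq i.-1 | i <- fv t & i != 0]
  | Reset t => fv t
  end.

Definition closed (t : term) : Prop := fv t = [::].

Definition is_value (t : term) : bool := if t is Lam _ then true else false.
Definition is_prog (t : term) : bool := if t is Reset _ then true else false.

(* Evaluation contexts F ::= [] | v F | F t | <F>;  v = Lam b is stored as b *)
Inductive ctx : Type :=
| Hole
| CVal of term & ctx
| CAppL of ctx & term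
| CReset of ctx.

Fixpoint plug (F : ctx) (t : term) : term :=
  match F with
  | Hole => t
  | CVal b F => App (Lam b) (plug F t)
  | CAppL F u => App (plug F t) u
  | CReset F => Reset (plug F t)
  end.

Fixpoint pure (F : ctx) : bool :=
  match F with
  | Hole => true
  | CVal _ F => pure F
  | CAppL F _ => pure F
  | CReset _ => false
  end.

(* shift all free indices of a context by one (so index 0 is fresh for it) *)
Fixpoint lift_ctx (F : ctx) : ctx :=
  match F with
  | Hole => Hole
  | CVal b F => CVal (tlift 1 1 b) (lift_ctx F)
  | CAppL F u => CAppL (lift_ctx F) (tlift 1 0 u)
  | CReset F => CReset (lift_ctx F)
  end.

Inductive step : term -> term -> Prop :=
| step_beta F b v : is_value v ->
    step (plug F (App (Lam b) v)) (plug F (subst0 v b))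
| step_shift F E t : pure E ->
    step (plug F (Reset (plug E (Shift t))))
         (plug F (Reset (subst0 (Lam (Reset (plug (lift_ctx E) (Var 0)))) t)))
| step_reset F v : is_value v ->
    step (plug F (Reset v)) (plug F v).

Inductive steps : term -> term -> Prop :=
| steps_refl t : steps t t
| steps_step t u w : step t u -> steps u w -> steps t w.

Definition rel := term -> term -> Prop.

Inductive tilde_gen (R : rel) : rel :=
| tg_R t0 t1 : R t0 t1 -> tilde_gen R t0 t1
| tg_var x : tilde_gen R (Var x) (Var x)
| tg_lam t0 t1 : tilde_gen R t0 t1 -> tilde_gen R (Lam t0) (Lam t1)
| tg_app a0 a1 b0 b1 : tilde_gen R a0 a1 -> tilde_gen R b0 b1 ->
    tilde_gen R (App a0 b0) (App a1 b1)
| tg_shift t0 t1 : tilde_gen R t0 t1 -> tilde_gen R (Shift t0) (Shift t1)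
| tg_reset t0 t1 : tilde_gen R t0 t1 -> tilde_gen R (Reset t0) (Reset t1).

Definition tilde (R : rel) : rel :=
  fun t0 t1 => tilde_gen R t0 t1 /\ closed t0 /\ closed t1.

Inductive hat (R : rel) : ctx -> ctx -> Prop :=
| hat_hole : hat R Hole Hole
| hat_val b0 b1 F0 F1 : hat R F0 F1 -> tilde R (Lam b0) (Lam b1) ->
    hat R (CVal b0 F0) (CVal b1 F1)
| hat_app F0 F1 t0 t1 : hat R F0 F1 -> tilde R t0 t1 ->
    hat R (CAppL F0 t0) (CAppL F1 t1)
| hat_reset F0 F1 : hat R F0 F1 -> hat R (CReset F0) (CReset F1).

Definition env_ok (E : rel) : Prop :=
  forall v0 v1, E v0 v1 -> [/\ is_value v0, is_value v1, closed v0 & closed v1].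

Definition env_empty : rel := fun _ _ => False.

Definition env_add (v0 v1 : term) (E : rel) : rel :=
  fun a b => (a = v0 /\ b = v1) \/ E a b.

Record envrel : Type := EnvRel {
  xenv : rel -> Prop;
  xtri : rel -> term -> term -> Prop
}.

Record is_env_bisim (X : envrel) : Prop := {
  eb_env_ok : forall E, xenv X E -> env_ok E;
  eb_tri_ok : forall E t0 t1, xtri X E t0 t1 ->
      [/\ env_ok E, closed t0 & closed t1];
  eb_ctx : forall E t0 t1, xtri X E t0 t1 -> ~~ (is_prog t0 && is_prog t1) ->
      forall E0 E1, pure E0 -> pure E1 -> hat E E0 E1 ->
      xtri X E (Reset (plug E0 t0)) (Reset (plug E1 t1));
  eb_prog_l : forall E p0 p1, xtri X E p0 p1 -> is_prog p0 -> is_prog p1 ->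
      forall p0', step p0 p0' -> is_prog p0' ->
      exists2 p1', steps p1 p1' & is_prog p1' /\ xtri X E p0' p1';
  eb_val_l : forall E p0 p1, xtri X E p0 p1 -> is_prog p0 -> is_prog p1 ->
      forall v0, step p0 v0 -> is_value v0 ->
      exists2 v1, steps p1 v1 & is_value v1 /\ xenv X (env_add v0 v1 E);
  eb_prog_r : forall E p0 p1, xtri X E p0 p1 -> is_prog p0 -> is_prog p1 ->
      forall p1', step p1 p1' -> is_prog p1' ->
      exists2 p0', steps p0 p0' & is_prog p0' /\ xtri X E p0' p1';
  eb_val_r : forall E p0 p1, xtri X E p0 p1 -> is_prog p0 -> is_prog p1 ->
      forall v1, step p1 v1 -> is_value v1 ->
      exists2 v0, steps p0 v0 & is_value v0 /\ xenv X (env_add v0 v1 E);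
  eb_lam : forall E, xenv X E -> forall b0 b1, E (Lam b0) (Lam b1) ->
      forall v0 v1, is_value v0 -> is_value v1 -> tilde E v0 v1 ->
      xtri X E (subst0 v0 b0) (subst0 v1 b1)
}.

Definition approx_p (E : rel) (t0 t1 : term) : Prop :=
  exists X, is_env_bisim X /\ xtri X E t0 t1.

Fixpoint ren (r : nat -> nat) (c : nat) (t : term) : term :=
  match t with
  | Var i => if i < c then Var i else Var (r (i - c) + c)
  | Lam t => Lam (ren r c.+1 t)
  | App a b => App (ren r c a) (ren r c b)
  | Shift t => Shift (ren r c.+1 t)
  | Reset t => Reset (ren r c t)
  end.

(* lambda x1 ... lambda xm . t, with xs = [:: x1; ...; xm] *)
Definition close (xs : seq nat) (t : term) : term :=
  iter (size xs) Lam (ren (fun x => (size xs).-1 - index x xs) 0 t).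

Definition open_approx (t0 t1 : term) : Prop :=
  let xs := sort leq (undup (fv t0 ++ fv t1)) in
  approx_p env_empty (close xs t0) (close xs t1).

From Pilot Require Import Defs.
From mathcomp Require Import all_boot zify.
Set Implicit Arguments. Unset Strict Implicit. Unset Printing Implicit Defensive.

(** Inside a reset, [Sk.k t] behaves like [t]: [<E[Sk.k t]>] steps to
    [<(λx.<E[x]>) t>], so [t] runs under the extra frame [(λx.<E[x]>) []],
    and once [t] returns a value [v] that frame produces [<<E[v]>>], which
    differs from [<E[v]>] by a reset that vanishes when [E[v]] returns.
    Accordingly [sim] is the smallest congruence relating [t] to [Sk.k t'],
    pure contexts [E] to frames [(λx.<E'[x]>) []], and programs [p] to
    [<p'>] (whenever [t ~ t'], [E ~ E'], [p ~ p']).  By mutual induction on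
    [sim], every step of a closed left-hand side is matched by at least one
    step on the right.  As reduction is deterministic, [sim] up to reduction
    on both sides is an environmental bisimulation, and abstracting the free
    variables preserves [sim]. *)

(** * Lifting and substitution *)

Ltac index_cases :=
  repeat (case: ifP => /= ?); first [reflexivity | congr Var; lia | exfalso; lia | idtac].

Lemma tlift0 t c : tlift 0 c t = t.
Proof.
elim: t c => [i|t IH|a IHa b IHb|t IH|t IH] c /=; rewrite ?IH ?IHa ?IHb //.
by case: ifP => _; rewrite ?addn0.
Qed.

Lemma tlift_comm t d c e c' : c' <= c ->
  tlift d (c + e) (tlift e c' t) = tlift e c' (tlift d c t).
Proof.
elim: t d c e c' => [i|t IH|a IHa b IHb|t IH|t IH] d c e c' le_c'c /=.
- by index_cases.
- by rewrite -addSn IH.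
- by rewrite IHa // IHb.
- by rewrite -addSn IH.
- by rewrite IH.
Qed.

Lemma tlift_tlift1 t d c c' : c' <= c ->
  tlift d c.+1 (tlift 1 c' t) = tlift 1 c' (tlift d c t).
Proof. by move=> le_c'c; rewrite -addn1 tlift_comm. Qed.

Lemma tliftD t d e c c' : c' <= c -> c <= c' + e ->
  tlift d c (tlift e c' t) = tlift (d + e) c' t.
Proof.
elim: t d e c c' => [i|t IH|a IHa b IHb|t IH|t IH] d e c c' le_c'c le_cc'e /=.
- by index_cases.
- by rewrite IH.
- by rewrite IHa // IHb.
- by rewrite IH.
- by rewrite IH.
Qed.

Lemma subst_tlift1 t n u c : c <= n ->
  subst n.+1 u (tlift 1 c t) = tlift 1 c (subst n u t).
Proof.
elim: t n u c => [i|t IH|a IHa b IHb|t IH|t IH] n u c le_cn /=;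
  rewrite ?IH ?IHa ?IHb //.
case: (ltngtP i n) => Hin; index_cases.
by rewrite tliftD ?add1n //; lia.
Qed.

Lemma subst_tliftK t n u : subst n u (tlift 1 n t) = t.
Proof.
elim: t n => [i|t IH|a IHa b IHb|t IH|t IH] n /=; rewrite ?IH ?IHa ?IHb //.
by index_cases.
Qed.

Fixpoint ctx_cat (E F : ctx) : ctx :=
  match E with
  | Hole => F
  | CVal b E => CVal b (ctx_cat E F)
  | CAppL E t => CAppL (ctx_cat E F) t
  | CReset E => CReset (ctx_cat E F)
  end.

Lemma plug_cat E F x : plug (ctx_cat E F) x = plug E (plug F x).
Proof. by elim: E => //= [b E ->|E -> t|E ->]. Qed.

Lemma ctx_catA E F G : ctx_cat (ctx_cat E F) G = ctx_cat E (ctx_cat F G).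
Proof. by elim: E => //= [b E ->|E -> t|E ->]. Qed.

Lemma ctx_cat_hole E : ctx_cat E Hole = E.
Proof. by elim: E => //= [b E ->|E -> t|E ->]. Qed.

Lemma pure_cat E F : pure (ctx_cat E F) = pure E && pure F.
Proof. by elim: E. Qed.

Fixpoint ctx_lift d c (E : ctx) : ctx :=
  match E with
  | Hole => Hole
  | CVal b E => CVal (tlift d c.+1 b) (ctx_lift d c E)
  | CAppL E t => CAppL (ctx_lift d c E) (tlift d c t)
  | CReset E => CReset (ctx_lift d c E)
  end.

Fixpoint ctx_subst n u (E : ctx) : ctx :=
  match E with
  | Hole => Hole
  | CVal b E => CVal (subst n.+1 u b) (ctx_subst n u E)
  | CAppL E t => CAppL (ctx_subst n u E) (subst n u t)
  | CReset E => CReset (ctx_subst n u E)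
  end.

Lemma lift_ctxE E : lift_ctx E = ctx_lift 1 0 E.
Proof. by elim: E => //= [b E ->|E -> t|E ->]. Qed.

Lemma tlift_plug d c E x :
  tlift d c (plug E x) = plug (ctx_lift d c E) (tlift d c x).
Proof. by elim: E => //= [b E ->|E -> t|E ->]. Qed.

Lemma subst_plug n u E x :
  subst n u (plug E x) = plug (ctx_subst n u E) (subst n u x).
Proof. by elim: E => //= [b E ->|E -> t|E ->]. Qed.

Lemma ctx_lift_cat d c E F :
  ctx_lift d c (ctx_cat E F) = ctx_cat (ctx_lift d c E) (ctx_lift d c F).
Proof. by elim: E => //= [b E ->|E -> t|E ->]. Qed.

Lemma ctx_subst_cat n u E F :
  ctx_subst n u (ctx_cat E F) = ctx_cat (ctx_subst n u E) (ctx_subst n u F).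
Proof. by elim: E => //= [b E ->|E -> t|E ->]. Qed.

Lemma ctx_lift_lift1 E d c :
  ctx_lift d c.+1 (ctx_lift 1 0 E) = ctx_lift 1 0 (ctx_lift d c E).
Proof.
by elim: E => //= [b E ->|E -> t|E ->]; rewrite ?tlift_tlift1.
Qed.

Lemma ctx_subst_lift1 E n u :
  ctx_subst n.+1 u (ctx_lift 1 0 E) = ctx_lift 1 0 (ctx_subst n u E).
Proof. by elim: E => //= [b E ->|E -> t|E ->]; rewrite ?subst_tlift1. Qed.

Lemma ctx_subst_liftK E n u : ctx_subst n u (ctx_lift 1 n E) = E.
Proof. by elim: E n => //= [b E IH|E IH t|E IH] n; rewrite ?IH ?subst_tliftK. Qed.

Lemma is_prog_tlift d c p : is_prog (tlift d c p) = is_prog p.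
Proof. by case: p => //= i; case: ifP. Qed.

Lemma is_prog_subst n u p : is_prog p -> is_prog (subst n u p).
Proof. by case: p. Qed.

Fixpoint wf k t : bool :=
  match t with
  | Var i => i < k
  | Lam t => wf k.+1 t
  | App a b => wf k a && wf k b
  | Shift t => wf k.+1 t
  | Reset t => wf k t
  end.

Fixpoint wf_ctx k E : bool :=
  match E with
  | Hole => true
  | CVal b E => wf k.+1 b && wf_ctx k E
  | CAppL E t => wf_ctx k E && wf k t
  | CReset E => wf_ctx k E
  end.

Lemma wf_fv t k : wf k t = all (fun i => i < k) (fv t).
Proof.
elim: t k => [i|t IH|a IHa b IHb|t IH|t IH] k /=.
- by rewrite andbT.
- by rewrite all_map all_filter IH; apply: eq_all => -[].
- by rewrite all_cat IHa IHb.
- by rewrite all_map all_filter IH; apply: eq_all => -[].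
- by [].
Qed.

Lemma closed_wf t : Defs.closed t <-> wf 0 t.
Proof. by rewrite wf_fv /Defs.closed; case: (fv t). Qed.

Lemma wf_plug k F x : wf k (plug F x) = wf_ctx k F && wf k x.
Proof. by elim: F => //= [b F ->|F -> t]; rewrite ?andbA // andbAC. Qed.

Lemma wf_mono t k k' : k <= k' -> wf k t -> wf k' t.
Proof.
elim: t k k' => [i|t IH|a IHa b IHb|t IH|t IH] k k' le_kk' /=.
- lia.
- exact: IH.
- by case/andP=> /(IHa _ _ le_kk') -> /(IHb _ _ le_kk').
- exact: IH.
- exact: IH.
Qed.

Lemma wf_ctx_mono E k k' : k <= k' -> wf_ctx k E -> wf_ctx k' E.
Proof.
move=> le_kk'; elim: E => [|b E IH|E IH t|E IH] //=.
- by case/andP=> /(wf_mono (le_kk' : k.+1 <= k'.+1)) -> /IH.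
- by case/andP=> /IH -> /(wf_mono le_kk').
Qed.

Lemma tlift_wf t d c : wf c t -> tlift d c t = t.
Proof.
elim: t d c => [i|t IH|a IHa b IHb|t IH|t IH] d c /=.
- by move=> lt_ic; rewrite leqNgt lt_ic.
- by move=> /IH ->.
- by case/andP=> /IHa -> /IHb ->.
- by move=> /IH ->.
- by move=> /IH ->.
Qed.

Lemma ctx_lift_wf E d c : wf_ctx c E -> ctx_lift d c E = E.
Proof.
elim: E => [|b E IH|E IH t|E IH] //=.
- by case/andP=> /tlift_wf -> /IH ->.
- by case/andP=> /IH -> /tlift_wf ->.
- by move=> /IH ->.
Qed.

Lemma wf_subst t k n u : n <= k -> wf 0 u -> wf k.+1 t -> wf k (subst n u t).
Proof.
move=> + wf_u; elim: t k n => [i|t IH|a IHa b IHb|t IH|t IH] k n le_nk /=.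
- move=> lt_ik; case: ltnP => /= [|le_ni]; first lia.
  case: eqP => /= [_|]; last lia.
  by rewrite tlift_wf; apply: wf_mono wf_u.
- exact: IH.
- by case/andP=> /IHa -> // /IHb ->.
- exact: IH.
- exact: IH.
Qed.

Lemma wf_subst0 v b : wf 0 v -> wf 1 b -> wf 0 (subst0 v b).
Proof. exact: wf_subst. Qed.

(** * Reduction *)

Definition kont (E : ctx) : term := Lam (Reset (plug (lift_ctx E) (Var 0))).

Definition kont_ctx (E : ctx) : ctx := CVal (Reset (plug (lift_ctx E) (Var 0))) Hole.

Inductive head_step : term -> term -> Prop :=
| head_beta b v : is_value v -> head_step (App (Lam b) v) (subst0 v b)
| head_shift E t : pure E ->
    head_step (Reset (plug E (Shift t))) (Reset (subst0 (kont E) t))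
| head_reset v : is_value v -> head_step (Reset v) v.

Lemma step_head F r r' : head_step r r' -> step (plug F r) (plug F r').
Proof. by case=> *; [apply: step_beta | apply: step_shift | apply: step_reset]. Qed.

Lemma step_inv t u : step t u ->
  exists F r r', [/\ head_step r r', t = plug F r & u = plug F r'].
Proof.
case=> [F b v Hv|F E s HE|F v Hv]; do 3 eexists; split; try reflexivity.
- exact: head_beta.
- exact: head_shift.
- exact: head_reset.
Qed.

Lemma step_plug G t u : step t u -> step (plug G t) (plug G u).
Proof. by case/step_inv=> F [r [r' [Hr -> ->]]]; rewrite -!plug_cat; apply: step_head. Qed.

Lemma plug_shift_shape E u : pure E ->
  is_value (plug E (Shift u)) = false /\ is_prog (plug E (Shift u)) = false.
Proof. by case: E. Qed.

(** [step] is deterministic: it agrees with the partial function [reduct]. *)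
Fixpoint stuck_split t : option (ctx * term) :=
  match t with
  | Shift u => Some (Hole, u)
  | App a b =>
      match stuck_split a, a with
      | Some (E, u), _ => Some (CAppL E b, u)
      | None, Lam bb =>
          if stuck_split b is Some (E, u) then Some (CVal bb E, u) else None
      | None, _ => None
      end
  | _ => None
  end.

Fixpoint reduct t : option term :=
  match t with
  | App a b =>
      match reduct a, a with
      | Some a', _ => Some (App a' b)
      | None, Lam bb =>
          match reduct b with
          | Some b' => Some (App a b')
          | None => if is_value b then Some (subst0 b bb) else None
          end
      | None, _ => None
      end
  | Reset s =>
      match reduct s with
      | Some s' => Some (Reset s')
      | None =>
          if is_value s then Some s else
          if stuck_split s is Some (E, u) then Some (Reset (subst0 (kont E) u))
          else None
      end
  | _ => None
  end.

Lemma reduct_stuck E u : pure E ->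
  reduct (plug E (Shift u)) = None /\ stuck_split (plug E (Shift u)) = Some (E, u).
Proof.
elim: E => [|b E IH|E IH t|E IH] //= pE; have [-> ->] := IH pE.
- by have [-> _] := plug_shift_shape u pE.
- by case: E pE {IH}.
Qed.

Lemma reduct_head F r r' : head_step r r' ->
  reduct (plug F r) = Some (plug F r') /\ stuck_split (plug F r) = None.
Proof.
move=> Hr; elim: F => [|b F IH|F IH t|F IH] /=.
- case: Hr => [b v|E t pE|v] /=; try by case: v.
  have [-> ->] := reduct_stuck t pE.
  by have [-> _] := plug_shift_shape t pE.
- by case: IH => -> ->.
- case: IH => -> ->; case: F => //=; by case: Hr.
- by case: IH => -> _.
Qed.

Lemma step_reduct t u : step t u -> reduct t = Some u.
Proof. by case/step_inv=> F [r [r' [Hr -> ->]]]; case: (reduct_head F Hr). Qed.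

Lemma step_det t u w : step t u -> step t w -> u = w.
Proof. by move=> /step_reduct + /step_reduct; move=> -> []. Qed.

Lemma value_irreducible v u : is_value v -> ~ step v u.
Proof. by case: v => // b _ /step_reduct. Qed.

Lemma closed_progress t : wf 0 t ->
  [\/ is_value t, exists E u, pure E /\ t = plug E (Shift u) | exists u, step t u].
Proof.
elim: t => [i|b _|a IHa b IHb|u _|s IH] //=.
- by move=> _; apply: Or31.
- case/andP=> /IHa [va|[E [u [pE ->]]]|[a' Ha]] /IHb.
  + case: a va {IHa} => // bb _ [vb|[E [u [pE ->]]]|[b' Hb]].
    * by apply: Or33; exists (subst0 b bb); apply: (step_beta Hole).
    * by apply: Or32; exists (CVal bb E), u.
    * by apply: Or33; exists (App (Lam bb) b'); apply: (step_plug (CVal bb Hole)).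
  + by move=> _; apply: Or32; exists (CAppL E b), u.
  + by move=> _; apply: Or33; exists (App a' b); apply: (step_plug (CAppL Hole b)).
- by move=> _; apply: Or32; exists Hole, u.
- move=> /IH [vs|[E [u [pE ->]]]|[s' Hs]]; apply: Or33.
  + by exists s; apply: (step_reset Hole).
  + by eexists; apply: (step_shift Hole).
  + by exists (Reset s'); apply: (step_plug (CReset Hole)).
Qed.

Lemma closed_prog_step p : wf 0 p -> is_prog p -> exists p', step p p'.
Proof.
move=> wf_p pp; case: (closed_progress wf_p) => [|[E [u [pE Ep]]]|//].
- by case: p pp {wf_p}.
- by case: (plug_shift_shape u pE); rewrite -Ep pp.
Qed.

Lemma steps_trans t u w : steps t u -> steps u w -> steps t w.
Proof. by elim=> // t0 u0 w0 Hs _ IH /IH; apply: steps_step. Qed.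

Lemma steps_one t u : step t u -> steps t u.
Proof. by move/steps_step; apply; apply: steps_refl. Qed.

Lemma steps_plug G t u : steps t u -> steps (plug G t) (plug G u).
Proof.
elim=> [t0|t0 u0 w0 Hs _ IH]; first exact: steps_refl.
exact: steps_step (step_plug G Hs) IH.
Qed.

Lemma steps_resets n t u : steps t u -> steps (iter n Reset t) (iter n Reset u).
Proof. by elim: n => //= n IH /IH; apply: (steps_plug (CReset Hole)). Qed.

Lemma steps_value v w : steps v w -> is_value v -> w = v.
Proof. by case=> // x y z Hs _ /value_irreducible/(_ Hs). Qed.

Lemma steps_inv t u : steps t u -> t = u \/ exists2 y, step t y & steps y u.
Proof. by case=> [x|x y z Hs Sy]; [left | right; exists y]. Qed.

Definition steps1 t u := exists2 w, step t w & steps w u.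

Lemma steps1_steps t u : steps1 t u -> steps t u.
Proof. by case=> w; apply: steps_step. Qed.

Lemma step_steps1 t u : step t u -> steps1 t u.
Proof. by exists u => //; apply: steps_refl. Qed.

Lemma steps1_steps_trans t u w : steps1 t u -> steps u w -> steps1 t w.
Proof. by case=> x Hx Sx /(steps_trans Sx); exists x. Qed.

Lemma steps_steps1_trans t u w : steps t u -> steps1 u w -> steps1 t w.
Proof.
case=> [//|t0 u0 w0 Hs St Su]; exists u0 => //.
exact: steps_trans St (steps1_steps Su).
Qed.

Lemma steps1_plug G t u : steps1 t u -> steps1 (plug G t) (plug G u).
Proof. by case=> w Hs Sw; exists (plug G w); [apply: step_plug | apply: steps_plug]. Qed.

Lemma steps1_resets n t u : steps1 t u -> steps1 (iter n Reset t) (iter n Reset u).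
Proof. by elim: n => //= n IH /IH; apply: (steps1_plug (CReset Hole)). Qed.

Lemma steps_reset_value k v : is_value v -> steps (iter k Reset v) v.
Proof.
move=> vv; elim: k => [|k IH] /=; first exact: steps_refl.
apply: steps_trans (steps_plug (CReset Hole) IH) (steps_one _).
exact: (step_reset Hole).
Qed.

Lemma wf_kont E : wf_ctx 0 E -> wf 0 (kont E).
Proof.
move=> wfE; rewrite /kont /= lift_ctxE ctx_lift_wf // wf_plug /= andbT.
exact: wf_ctx_mono wfE.
Qed.

Lemma step_wf t u : step t u -> wf 0 t -> wf 0 u.
Proof.
case/step_inv=> F [r [r' [Hr -> ->]]]; rewrite !wf_plug => /andP[-> /=].
case: Hr => [b v _|E s _|v _] /=.
- by case/andP=> wf_b wf_v; apply: wf_subst0.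
- by rewrite wf_plug => /andP[wfE]; apply: wf_subst0 (wf_kont wfE).
- by [].
Qed.

Lemma steps_wf t u : steps t u -> wf 0 t -> wf 0 u.
Proof. by elim=> // t0 u0 w0 /step_wf Hs _ IH /Hs. Qed.

Lemma step_prog p q : step p q -> is_prog p -> is_prog q || is_value q.
Proof.
case/step_inv=> F [r [r' [Hr -> ->]]]; case: F => [|b F|F t|F] //=.
by case: Hr => //= v -> _; rewrite orbT.
Qed.

Lemma steps_prog p q : steps p q -> is_prog p -> is_prog q || is_value q.
Proof.
elim=> [t0 ->|t0 u0 w0 Hs Su IH pt] //.
by case/orP: (step_prog Hs pt) => [/IH //| vu]; rewrite (steps_value Su vu) vu orbT.
Qed.

(** * The relation [sim] *)

Definition shift_elim (t : term) : term := Shift (App (Var 0) (tlift 1 0 t)).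

Inductive sim : term -> term -> Prop :=
| sim_var i : sim (Var i) (Var i)
| sim_lam a b : sim a b -> sim (Lam a) (Lam b)
| sim_app a0 a1 b0 b1 : sim a0 a1 -> sim b0 b1 -> sim (App a0 b0) (App a1 b1)
| sim_shift a b : sim a b -> sim (Shift a) (Shift b)
| sim_reset E0 E1 s0 s1 : sim_ctx E0 E1 -> sim s0 s1 ->
    sim (Reset (plug E0 s0)) (Reset (plug E1 s1))
| sim_elim t t' : sim t t' -> sim t (shift_elim t')
| sim_reset_prog p p' : sim p p' -> is_prog p -> is_prog p' -> sim p (Reset p')
with sim_ctx : ctx -> ctx -> Prop :=
| sim_hole : sim_ctx Hole Hole
| sim_ctx_val E0 E1 b0 b1 : sim_ctx E0 E1 -> sim b0 b1 ->
    sim_ctx (ctx_cat E0 (CVal b0 Hole)) (ctx_cat E1 (CVal b1 Hole))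
| sim_ctx_app E0 E1 t0 t1 : sim_ctx E0 E1 -> sim t0 t1 ->
    sim_ctx (ctx_cat E0 (CAppL Hole t0)) (ctx_cat E1 (CAppL Hole t1))
| sim_ctx_kont E0 E1 : sim_ctx E0 E1 -> sim_ctx E0 (kont_ctx E1).

Scheme sim_ind2 := Induction for sim Sort Prop
with sim_ctx_ind2 := Induction for sim_ctx Sort Prop.
Combined Scheme sim_mutind from sim_ind2, sim_ctx_ind2.

Lemma sim_ctx_pure E0 E1 : sim_ctx E0 E1 -> pure E0 /\ pure E1.
Proof.
elim=> //= [F0 F1 b0 b1|F0 F1 t0 t1|F0 F1] _ [p0 p1] => [_|_|];
  by rewrite ?pure_cat ?p0 ?p1.
Qed.

Lemma tlift_shift_elim d c t : tlift d c (shift_elim t) = shift_elim (tlift d c t).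
Proof. by rewrite /shift_elim /= tlift_tlift1. Qed.

Lemma subst_shift_elim n u t : subst n u (shift_elim t) = shift_elim (subst n u t).
Proof. by rewrite /shift_elim /= subst_tlift1. Qed.

Lemma ctx_lift_kont_ctx d c E :
  ctx_lift d c (kont_ctx E) = kont_ctx (ctx_lift d c E).
Proof. by rewrite /kont_ctx /= tlift_plug !lift_ctxE ctx_lift_lift1. Qed.

Lemma ctx_subst_kont_ctx n u E :
  ctx_subst n u (kont_ctx E) = kont_ctx (ctx_subst n u E).
Proof. by rewrite /kont_ctx /= subst_plug !lift_ctxE ctx_subst_lift1. Qed.

Lemma sim_tlift_mut :
  (forall x y, sim x y -> forall d c, sim (tlift d c x) (tlift d c y)) /\
  (forall E0 E1, sim_ctx E0 E1 ->
     forall d c, sim_ctx (ctx_lift d c E0) (ctx_lift d c E1)).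
Proof.
apply: (@sim_mutind
  (fun x y (_ : sim x y) => forall d c, sim (tlift d c x) (tlift d c y))
  (fun E0 E1 (_ : sim_ctx E0 E1) => forall d c, sim_ctx (ctx_lift d c E0) (ctx_lift d c E1))).
- by move=> i d c /=; case: ifP => _; apply: sim_var.
- by move=> a b _ IH d c; apply/sim_lam/IH.
- by move=> a0 a1 b0 b1 _ IHa _ IHb d c; apply/sim_app; [apply: IHa | apply: IHb].
- by move=> a b _ IH d c; apply/sim_shift/IH.
- by move=> E0 E1 s0 s1 _ IHE _ IHs d c /=; rewrite !tlift_plug; apply: sim_reset.
- by move=> t t' _ IH d c; rewrite tlift_shift_elim; apply/sim_elim/IH.
- by move=> p p' _ IH pp pp' d c; apply: sim_reset_prog; rewrite ?is_prog_tlift.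
- by move=> d c; apply: sim_hole.
- by move=> E0 E1 b0 b1 _ IHE _ IHb d c; rewrite !ctx_lift_cat; apply: sim_ctx_val.
- by move=> E0 E1 t0 t1 _ IHE _ IHt d c; rewrite !ctx_lift_cat; apply: sim_ctx_app.
- by move=> E0 E1 _ IHE d c; rewrite ctx_lift_kont_ctx; apply: sim_ctx_kont.
Qed.

Lemma sim_tlift x y d c : sim x y -> sim (tlift d c x) (tlift d c y).
Proof. by move=> Hxy; apply: (proj1 sim_tlift_mut). Qed.

Lemma sim_subst_mut :
  (forall x y, sim x y -> forall n u0 u1, sim u0 u1 ->
     sim (subst n u0 x) (subst n u1 y)) /\
  (forall E0 E1, sim_ctx E0 E1 -> forall n u0 u1, sim u0 u1 ->
     sim_ctx (ctx_subst n u0 E0) (ctx_subst n u1 E1)).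
Proof.
apply: (@sim_mutind
  (fun x y (_ : sim x y) => forall n u0 u1, sim u0 u1 -> sim (subst n u0 x) (subst n u1 y))
  (fun E0 E1 (_ : sim_ctx E0 E1) => forall n u0 u1, sim u0 u1 ->
     sim_ctx (ctx_subst n u0 E0) (ctx_subst n u1 E1))).
- move=> i n u0 u1 Hu /=; case: ifP => _; first exact: sim_var.
  by case: ifP => _; [apply: sim_tlift | apply: sim_var].
- by move=> a b _ IH n u0 u1 Hu; apply/sim_lam/IH.
- by move=> a0 a1 b0 b1 _ IHa _ IHb n u0 u1 Hu; apply/sim_app; [apply: IHa | apply: IHb].
- by move=> a b _ IH n u0 u1 Hu; apply/sim_shift/IH.
- move=> E0 E1 s0 s1 _ IHE _ IHs n u0 u1 Hu /=; rewrite !subst_plug.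
  by apply: sim_reset; [apply: IHE | apply: IHs].
- by move=> t t' _ IH n u0 u1 Hu; rewrite subst_shift_elim; apply/sim_elim/IH.
- move=> p p' _ IH pp pp' n u0 u1 Hu.
  by apply: sim_reset_prog; [apply: IH | apply: is_prog_subst..].
- by move=> n u0 u1 _; apply: sim_hole.
- move=> E0 E1 b0 b1 _ IHE _ IHb n u0 u1 Hu; rewrite !ctx_subst_cat.
  by apply: sim_ctx_val; [apply: IHE | apply: IHb].
- move=> E0 E1 t0 t1 _ IHE _ IHt n u0 u1 Hu; rewrite !ctx_subst_cat.
  by apply: sim_ctx_app; [apply: IHE | apply: IHt].
- by move=> E0 E1 _ IHE n u0 u1 Hu; rewrite ctx_subst_kont_ctx; apply/sim_ctx_kont/IHE.
Qed.

Lemma sim_subst x y n u0 u1 : sim x y -> sim u0 u1 -> sim (subst n u0 x) (subst n u1 y).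
Proof. by move=> Hxy Hu; apply: (proj1 sim_subst_mut). Qed.

Lemma sim_refl t : sim t t.
Proof.
elim: t => [i|t|a + b|t|t] => *; try by constructor.
exact: (sim_reset sim_hole).
Qed.

Lemma sim_lam_inv a b : sim (Lam a) (Lam b) -> sim a b.
Proof. by move=> H; inversion H. Qed.

Lemma sim_value_inv v x : sim v x -> is_value v ->
  exists n w, [/\ x = iter n shift_elim w, is_value w & sim v w].
Proof.
elim=> //.
- by move=> a b Hab _ _; exists 0, (Lam b); split=> //; apply: sim_lam.
- by move=> t t' _ IH /IH [n [w [-> vw Hw]]]; exists n.+1, w.
- by move=> p p' _ _ pp _; case: p pp.
Qed.

Lemma sim_lam_inv_l b x : sim (Lam b) x ->
  exists n b', x = iter n shift_elim (Lam b') /\ sim b b'.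
Proof.
case/sim_value_inv=> // n [w [-> + Hb]]; case: w Hb => // b' Hb _.
by exists n, b'; split=> //; apply: sim_lam_inv.
Qed.

Lemma sim_prog_nonvalue p x : sim p x -> is_prog p -> is_value x = false.
Proof. by case. Qed.

Lemma sim_value_progvalue v x : sim v x -> is_value v -> is_prog x || is_value x ->
  is_value x.
Proof. by move=> /sim_value_inv H /H [[|n] [w [-> vw _]]]. Qed.

Lemma sim_prog_progvalue p x : sim p x -> is_prog x -> is_prog p || is_value p ->
  is_prog p.
Proof.
move=> Hpx px /orP[//|vp].
by move: (sim_value_progvalue Hpx vp); rewrite px => /(_ isT); case: x px {Hpx}.
Qed.

Lemma sim_resets n p x : sim p x -> is_prog p -> is_prog x ->
  sim p (iter n Reset x).
Proof. by move=> Hpx pp px; elim: n => //= -[|n] IH; apply: sim_reset_prog. Qed.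

Lemma sim_kont E0 E1 : sim_ctx E0 E1 -> sim (kont E0) (kont E1).
Proof.
move=> HE; rewrite /kont !lift_ctxE.
by apply/sim_lam/sim_reset; [apply: (proj2 sim_tlift_mut) | apply: sim_var].
Qed.

Lemma subst_kont E v : subst0 v (Reset (plug (lift_ctx E) (Var 0))) = Reset (plug E v).
Proof. by rewrite /subst0 /= subst_plug lift_ctxE ctx_subst_liftK /= tlift0. Qed.

Lemma step_kont E v : is_value v -> step (plug (kont_ctx E) v) (Reset (plug E v)).
Proof. by move=> vv; rewrite -(subst_kont E); apply: (step_beta Hole). Qed.

Lemma step_shift_elim E t : pure E ->
  step (Reset (plug E (shift_elim t))) (Reset (plug (kont_ctx E) t)).
Proof.
move=> pE; have := step_shift Hole (App (Var 0) (tlift 1 0 t)) pE.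
by rewrite /= /subst0 /= tlift0 subst_tliftK.
Qed.

Lemma steps_shift_elim_value E v n : pure E -> is_value v ->
  steps (Reset (plug E (iter n shift_elim v))) (iter n Reset (Reset (plug E v))).
Proof.
elim: n E => [|n IH] E pE vv; first exact: steps_refl.
rewrite [iter n.+1 shift_elim _]iterS [iter n.+1 Reset _]iterSr.
apply: steps_step (step_shift_elim _ pE) _.
apply: steps_trans (IH (kont_ctx E) isT vv) _.
exact/steps_resets/steps_one/(step_plug (CReset Hole))/step_kont.
Qed.

Lemma steps_reset_sim k a b : sim a b -> is_prog a || is_value a ->
  is_prog b || is_value b -> exists2 b', steps (iter k Reset b) b' & sim a b'.
Proof.
move=> Hab /orP[pa|va] pvb.
- exists (iter k Reset b); first exact: steps_refl.
  by apply: sim_resets; move: pvb; rewrite ?(sim_prog_nonvalue Hab pa) ?orbF.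
- have vb := sim_value_progvalue Hab va pvb.
  by exists b => //; apply: steps_reset_value.
Qed.

Lemma steps1_prog p q : steps1 p q -> is_prog p -> is_prog q || is_value q.
Proof. by move/steps1_steps; apply: steps_prog. Qed.

Lemma steps1_resets_sim n x b a : steps1 x b -> is_prog x -> sim a b ->
  is_prog a || is_value a -> exists2 b', steps1 (iter n Reset x) b' & sim a b'.
Proof.
move=> Sxb px Hab pva; have [b' Sb' Hab'] := steps_reset_sim n Hab pva (steps1_prog Sxb px).
by exists b' => //; apply: steps1_steps_trans (steps1_resets n Sxb) Sb'.
Qed.

(** * Simulation *)

Definition sim_prog_step x0 x1 := wf 0 x0 -> is_prog x0 -> is_prog x1 ->
  forall x0', step x0 x0' -> exists2 x1', steps1 x1 x1' & sim x0' x1'.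

Definition sim_reset_step x0 x1 := wf 0 x0 -> is_value x0 = false ->
  forall E0 E1, sim_ctx E0 E1 -> forall a', step (Reset (plug E0 x0)) a' ->
  exists2 b', steps1 (Reset (plug E1 x1)) b' & sim a' b'.

Definition ctx_simulates E0 E1 := forall v0 v1, is_value v0 -> is_value v1 ->
  sim v0 v1 -> wf 0 (plug E0 v0) -> forall a', step (Reset (plug E0 v0)) a' ->
  exists2 b', steps1 (Reset (plug E1 v1)) b' & sim a' b'.

Lemma sim_reset_step_value v x : is_value v -> sim_reset_step v x.
Proof. by move=> vv _; rewrite vv. Qed.

Lemma sim_reset_step_prog p p' : is_prog p -> is_prog p' -> sim_prog_step p p' ->
  sim_reset_step p p'.
Proof.
move=> pp pp' Hsim wf_p _ E0 E1 HE a' Hs.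
have [p0' Hp] := closed_prog_step wf_p pp.
rewrite (step_det Hs (step_plug (CReset E0) Hp)).
have [p1' Sp Hp'] := Hsim wf_p pp pp' _ Hp.
by exists (Reset (plug E1 p1')); [apply: (steps1_plug (CReset E1)) | apply: sim_reset].
Qed.

Lemma sim_reset_step_beta E0 E1 b0 b1 t0 t1 a' : sim_ctx E0 E1 -> sim b0 b1 ->
  sim t0 t1 -> sim_reset_step t0 t1 -> wf 0 t0 ->
  step (Reset (plug E0 (App (Lam b0) t0))) a' ->
  exists2 b', steps1 (Reset (plug E1 (App (Lam b1) t1))) b' & sim a' b'.
Proof.
move=> HE Hb Ht IHt wf_t Hs; have [_ pE1] := sim_ctx_pure HE.
have HEb := sim_ctx_val HE Hb.
case vt: (is_value t0); last first.
  by move: (IHt wf_t vt _ _ HEb a'); rewrite !plug_cat /=; apply.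
rewrite (step_det Hs (step_beta (CReset E0) b0 vt)) /=.
have [m [w [-> vw Hw]]] := sim_value_inv Ht vt.
exists (iter m Reset (Reset (plug E1 (subst0 w b1)))).
- have := @steps_shift_elim_value (ctx_cat E1 (CVal b1 Hole)) w m.
  rewrite pure_cat pE1 !plug_cat /= => /(_ isT vw) /steps_steps1_trans; apply.
  exact/steps1_resets/step_steps1/(step_beta (CReset E1)).
- by apply: sim_resets => //; apply: sim_reset => //; apply: sim_subst.
Qed.

Definition simulates x0 x1 := sim_prog_step x0 x1 /\ sim_reset_step x0 x1.

Lemma simulates_var i : simulates (Var i) (Var i).
Proof. by []. Qed.

Lemma simulates_lam a b : simulates (Lam a) (Lam b).
Proof. by split=> //; apply: sim_reset_step_value. Qed.

Lemma simulates_shift a b : sim a b -> simulates (Shift a) (Shift b).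
Proof.
move=> Hab; split=> // _ _ E0 E1 HE a' Hs; have [pE0 pE1] := sim_ctx_pure HE.
rewrite (step_det Hs (step_shift Hole a pE0)).
exists (Reset (subst0 (kont E1) b)); first exact/step_steps1/(step_shift Hole).
by apply: (sim_reset sim_hole); apply: sim_subst => //; apply: sim_kont.
Qed.

Lemma simulates_app a0 a1 b0 b1 : sim a0 a1 -> simulates a0 a1 ->
  sim b0 b1 -> simulates b0 b1 -> simulates (App a0 b0) (App a1 b1).
Proof.
move=> Ha [_ IHa] Hb [_ IHb]; split=> // /andP[wf_a wf_b] _ E0 E1 HE a' Hs.
have [_ pE1] := sim_ctx_pure HE.
case va: (is_value a0); last first.
  by move: (IHa wf_a va _ _ (sim_ctx_app HE Hb) a'); rewrite !plug_cat /=; apply.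
case: a0 va Ha wf_a Hs {IHa} => // bb _ /sim_lam_inv_l [n [bb1 [-> Hbb]]] _ Hs.
have [y Sy Hy] := sim_reset_step_beta HE Hbb Hb IHb wf_b Hs.
have [b' Sb' Hb'] := steps1_resets_sim n Sy isT Hy (step_prog Hs isT).
exists b' => //; apply: steps_steps1_trans Sb'.
have := @steps_shift_elim_value (ctx_cat E1 (CAppL Hole b1)) (Lam bb1) n.
by rewrite pure_cat pE1 !plug_cat /=; apply.
Qed.

Lemma sim_prog_step_reset E0 E1 s0 s1 : sim_ctx E0 E1 -> ctx_simulates E0 E1 ->
  sim s0 s1 -> sim_reset_step s0 s1 ->
  sim_prog_step (Reset (plug E0 s0)) (Reset (plug E1 s1)).
Proof.
move=> HE HEsim Hs IHs wf_x _ _ x0' Hx; have [_ pE1] := sim_ctx_pure HE.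
have /andP[_ wf_s] : wf_ctx 0 E0 && wf 0 s0 by rewrite -wf_plug; exact: wf_x.
case vs: (is_value s0); last exact: IHs wf_s vs E0 E1 HE x0' Hx.
have [n [w [-> vw Hw]]] := sim_value_inv Hs vs.
have [y Sy Hy] := HEsim s0 w vs vw Hw wf_x x0' Hx.
have [b' Sb' Hb'] := steps1_resets_sim n Sy isT Hy (step_prog Hx isT).
by exists b' => //; apply: steps_steps1_trans (steps_shift_elim_value n pE1 vw) Sb'.
Qed.

Lemma simulates_reset E0 E1 s0 s1 : sim_ctx E0 E1 -> ctx_simulates E0 E1 ->
  sim s0 s1 -> simulates s0 s1 -> simulates (Reset (plug E0 s0)) (Reset (plug E1 s1)).
Proof.
move=> HE HEsim Hs [_ IHs]; have Hprog := sim_prog_step_reset HE HEsim Hs IHs.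
by split=> //; apply: sim_reset_step_prog.
Qed.

Lemma simulates_elim t t' : simulates t t' -> simulates t (shift_elim t').
Proof.
move=> [_ IH]; split=> // wf_t vt E0 E1 HE a' Hs; have [_ pE1] := sim_ctx_pure HE.
have [b' S Hb'] := IH wf_t vt _ _ (sim_ctx_kont HE) a' Hs.
by exists b' => //; apply: steps_steps1_trans (steps_one (step_shift_elim t' pE1)) S.
Qed.

Lemma simulates_reset_prog p p' : simulates p p' -> is_prog p -> is_prog p' ->
  simulates p (Reset p').
Proof.
move=> [IH _] pp pp'; have Hprog : sim_prog_step p (Reset p').
  move=> wf_p _ _ p0' Hs; have [p'' S Hp''] := IH wf_p pp pp' _ Hs.
  by have [b' ? ?] := steps1_resets_sim 1 S pp' Hp'' (step_prog Hs pp); exists b'.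
by split=> //; apply: sim_reset_step_prog.
Qed.

Lemma ctx_simulates_hole : ctx_simulates Hole Hole.
Proof.
move=> v0 v1 vv0 vv1 Hv _ a' /= Hs; rewrite (step_det Hs (step_reset Hole vv0)).
by exists v1 => //; apply/step_steps1/(step_reset Hole).
Qed.

Lemma ctx_simulates_val E0 E1 b0 b1 : sim_ctx E0 E1 -> sim b0 b1 ->
  ctx_simulates (ctx_cat E0 (CVal b0 Hole)) (ctx_cat E1 (CVal b1 Hole)).
Proof.
move=> HE Hb v0 v1 vv0 vv1 Hv; rewrite !plug_cat wf_plug /= => /and3P[_ _ wf_v] a'.
exact: sim_reset_step_beta HE Hb Hv (sim_reset_step_value _ vv0) wf_v.
Qed.

Lemma ctx_simulates_app E0 E1 t0 t1 : sim_ctx E0 E1 -> sim t0 t1 -> simulates t0 t1 ->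
  ctx_simulates (ctx_cat E0 (CAppL Hole t0)) (ctx_cat E1 (CAppL Hole t1)).
Proof.
move=> HE Ht [_ IHt] v0 v1 vv0 vv1 Hv.
case: v0 vv0 Hv => // b0 _ /sim_lam_inv_l [[|n] [b1 [Ev1 Hb]]]; last by rewrite Ev1 in vv1.
rewrite Ev1 !plug_cat wf_plug /= => /and3P[_ _ wf_t] a'.
exact: sim_reset_step_beta HE Hb Ht IHt wf_t.
Qed.

Lemma ctx_simulates_kont E0 E1 : ctx_simulates E0 E1 -> ctx_simulates E0 (kont_ctx E1).
Proof.
move=> IH v0 v1 vv0 vv1 Hv wf_x a' Hs.
have [y Sy Hy] := IH v0 v1 vv0 vv1 Hv wf_x a' Hs.
have [b' Sb' Hb'] := steps1_resets_sim 1 Sy isT Hy (step_prog Hs isT).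
exists b' => //; apply: steps_steps1_trans Sb'.
exact/steps_one/(step_plug (CReset Hole))/step_kont.
Qed.

Lemma sim_simulates_mut :
  (forall x y, sim x y -> simulates x y) /\
  (forall E0 E1, sim_ctx E0 E1 -> ctx_simulates E0 E1).
Proof.
apply: (@sim_mutind (fun x y _ => simulates x y) (fun E0 E1 _ => ctx_simulates E0 E1)).
- exact: simulates_var.
- by move=> *; apply: simulates_lam.
- by move=> a0 a1 b0 b1 Ha IHa Hb IHb; apply: simulates_app.
- by move=> a b Hab _; apply: simulates_shift.
- by move=> E0 E1 s0 s1 HE IHE Hs IHs; apply: simulates_reset.
- by move=> t t' _ IH; apply: simulates_elim.
- by move=> p p' _ IH pp pp'; apply: simulates_reset_prog.
- exact: ctx_simulates_hole.
- by move=> E0 E1 b0 b1 HE _ Hb _; apply: ctx_simulates_val.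
- by move=> E0 E1 t0 t1 HE _ Ht IHt; apply: ctx_simulates_app.
- by move=> E0 E1 _ IH; apply: ctx_simulates_kont.
Qed.

Lemma sim_step_prog p0 p1 p0' : sim p0 p1 -> wf 0 p0 -> is_prog p0 -> is_prog p1 ->
  step p0 p0' -> exists2 p1', steps1 p1 p1' & sim p0' p1'.
Proof. by case/(proj1 sim_simulates_mut) => Hprog _ wf_p pp0 pp1 /(Hprog wf_p pp0 pp1). Qed.

(** * Bisimulation *)

Definition sim_upto t0 t1 := exists a b, [/\ steps t0 a, steps t1 b & sim a b].

Lemma sim_sim_upto t0 t1 : sim t0 t1 -> sim_upto t0 t1.
Proof. by exists t0, t1; split=> //; apply: steps_refl. Qed.

Lemma sim_upto_step_l p0 p1 p0' : wf 0 p0 -> is_prog p0 -> is_prog p1 ->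
  sim_upto p0 p1 -> step p0 p0' -> sim_upto p0' p1.
Proof.
move=> wf_p pp0 pp1 [a [b [/steps_inv [<-|[y Hy Sa]] Sb Hab]]] Hs; last first.
  by rewrite (step_det Hs Hy); exists a, b.
have pb : is_prog b.
  by move: (steps_prog Sb pp1); rewrite (sim_prog_nonvalue Hab pp0) orbF.
have [q Sq Hq] := sim_step_prog Hab wf_p pp0 pb Hs.
by exists p0', q; split=> //; [apply: steps_refl | apply: steps_trans Sb (steps1_steps Sq)].
Qed.

Lemma sim_upto_step_r p0 p1 p1' : wf 0 p0 -> is_prog p0 -> is_prog p1 ->
  sim_upto p0 p1 -> step p1 p1' -> sim_upto p0 p1'.
Proof.
move=> wf_p pp0 pp1 [a [b [Sa /steps_inv [<-|[y Hy Sb]] Hab]]] Hs; last first.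
  by rewrite (step_det Hs Hy); exists a, b.
have pa := sim_prog_progvalue Hab pp1 (steps_prog Sa pp0).
have [a' Ha] := closed_prog_step (steps_wf Sa wf_p) pa.
have [q [y Hy Sq] Hq] := sim_step_prog Hab (steps_wf Sa wf_p) pa pp1 Ha.
exists a', q; split=> //; first exact: steps_trans Sa (steps_one Ha).
by rewrite (step_det Hs Hy).
Qed.

Lemma sim_upto_value_l v0 p1 : is_value v0 -> is_prog p1 -> sim_upto v0 p1 ->
  exists2 v1, steps p1 v1 & is_value v1 /\ sim v0 v1.
Proof.
move=> vv0 pp1 [a [b [/steps_value -> // Sb Hab]]].
by exists b => //; split=> //; apply: sim_value_progvalue Hab vv0 (steps_prog Sb pp1).
Qed.

Lemma sim_upto_value_r p0 v1 : is_prog p0 -> is_value v1 -> sim_upto p0 v1 ->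
  exists2 v0, steps p0 v0 & is_value v0 /\ sim v0 v1.
Proof.
move=> pp0 vv1 [a [b [Sa /steps_value -> // Hab]]].
exists a => //; split=> //; case/orP: (steps_prog Sa pp0) => // pa.
by rewrite (sim_prog_nonvalue Hab pa) in vv1.
Qed.

Lemma tilde_sim (E : Defs.rel) a b : (forall x y, E x y -> sim x y) ->
  tilde_gen E a b -> sim a b.
Proof.
move=> HE; elim=> {a b} [a b /HE //|i|a b _|a0 a1 b0 b1 _ + _|a b _|a b _] => *.
- exact: sim_var.
- exact: sim_lam.
- exact: sim_app.
- exact: sim_shift.
- exact: (sim_reset sim_hole).
Qed.

Lemma hat_sim_ctx (E : Defs.rel) E0 E1 : (forall x y, E x y -> sim x y) ->
  hat E E0 E1 -> pure E0 ->
  forall F0 F1, sim_ctx F0 F1 -> sim_ctx (ctx_cat F0 E0) (ctx_cat F1 E1).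
Proof.
move=> HE; elim=> {E0 E1} [|b0 b1 E0 E1 _ IH [Hb _]|E0 E1 t0 t1 _ IH [Ht _]|//] /=.
- by move=> _ F0 F1; rewrite !ctx_cat_hole.
- move=> pE0 F0 F1 HF; rewrite -[CVal b0 _]/(ctx_cat (CVal b0 Hole) E0).
  rewrite -[CVal b1 _]/(ctx_cat (CVal b1 Hole) E1) -!ctx_catA.
  by apply: IH => //; apply: sim_ctx_val HF (sim_lam_inv (tilde_sim HE Hb)).
- move=> pE0 F0 F1 HF; rewrite -[CAppL E0 _]/(ctx_cat (CAppL Hole t0) E0).
  rewrite -[CAppL E1 _]/(ctx_cat (CAppL Hole t1) E1) -!ctx_catA.
  by apply: IH => //; apply: sim_ctx_app HF (tilde_sim HE Ht).
Qed.

Lemma hat_wf (E : Defs.rel) E0 E1 : hat E E0 E1 -> wf_ctx 0 E0 && wf_ctx 0 E1.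
Proof.
elim=> {E0 E1} //=.
- by move=> b0 b1 F0 F1 _ /andP[-> ->] [_ [/closed_wf /= -> /closed_wf /= ->]].
- by move=> F0 F1 t0 t1 _ /andP[-> ->] [_ [/closed_wf -> /closed_wf ->]].
Qed.

Definition sim_env (E : Defs.rel) := env_ok E /\ (forall a b, E a b -> sim a b).

Definition sim_envrel : envrel :=
  EnvRel sim_env (fun E t0 t1 => [/\ sim_env E, wf 0 t0, wf 0 t1 & sim_upto t0 t1]).

Lemma sim_env_add E v0 v1 : sim_env E -> is_value v0 -> is_value v1 ->
  wf 0 v0 -> wf 0 v1 -> sim v0 v1 -> sim_env (env_add v0 v1 E).
Proof.
move=> [Eok Esim] vv0 vv1 wf0 wf1 Hv; split=> a b [[-> ->]|Hab] //; last exact: Esim.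
- by split=> //; apply/closed_wf.
- exact: Eok.
Qed.

Lemma sim_envrel_bisim : is_env_bisim sim_envrel.
Proof.
split=> /=.
- by move=> E [].
- by move=> E t0 t1 [[Eok _] wf0 wf1 _]; split=> //; apply/closed_wf.
- move=> E t0 t1 [HE wf0 wf1 [a [b [Sa Sb Hab]]]] _ E0 E1 pE0 _ HE01.
  have /andP[wfE0 wfE1] := hat_wf HE01.
  split=> //=; rewrite ?wf_plug ?wfE0 ?wfE1 //.
  exists (Reset (plug E0 a)), (Reset (plug E1 b)); split.
  + exact: (steps_plug (CReset E0)).
  + exact: (steps_plug (CReset E1)).
  + by apply: sim_reset Hab; apply: hat_sim_ctx (proj2 HE) HE01 pE0 _ _ sim_hole.
- move=> E p0 p1 [HE wf0 wf1 H] pp0 pp1 p0' Hs pp0'.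
  exists p1; first exact: steps_refl.
  by split=> //; split=> //; [apply: step_wf Hs wf0 | apply: sim_upto_step_l Hs].
- move=> E p0 p1 [HE wf0 wf1 H] pp0 pp1 v0 Hs vv0.
  have [v1 Sv [vv1 Hv]] := sim_upto_value_l vv0 pp1 (sim_upto_step_l wf0 pp0 pp1 H Hs).
  exists v1 => //; split=> //.
  by apply: sim_env_add => //; [apply: step_wf Hs wf0 | apply: steps_wf Sv wf1].
- move=> E p0 p1 [HE wf0 wf1 H] pp0 pp1 p1' Hs pp1'.
  exists p0; first exact: steps_refl.
  by split=> //; split=> //; [apply: step_wf Hs wf1 | apply: sim_upto_step_r Hs].
- move=> E p0 p1 [HE wf0 wf1 H] pp0 pp1 v1 Hs vv1.
  have [v0 Sv [vv0 Hv]] := sim_upto_value_r pp0 vv1 (sim_upto_step_r wf0 pp0 pp1 H Hs).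
  exists v0 => //; split=> //.
  by apply: sim_env_add => //; [apply: steps_wf Sv wf0 | apply: step_wf Hs wf1].
- move=> E [Eok Esim] b0 b1 Hb v0 v1 vv0 vv1 [Hv [/closed_wf wv0 /closed_wf wv1]].
  have [_ _ /closed_wf wb0 /closed_wf wb1] := Eok _ _ Hb.
  split=> //; try exact: wf_subst0.
  apply/sim_sim_upto/sim_subst; first exact: sim_lam_inv (Esim _ _ Hb).
  exact: tilde_sim Esim Hv.
Qed.

(** * Closing open terms *)

Lemma ren_tlift1 r t c : ren r c.+1 (tlift 1 c t) = tlift 1 c (ren r c t).
Proof.
elim: t c => [i|t IH|a IHa b IHb|t IH|t IH] c /=; rewrite ?IH ?IHa ?IHb //.
index_cases; have -> : i + 1 - c.+1 = i - c by lia.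
by rewrite addnS addn1.
Qed.

Lemma mem_fv_binder j s : j \in s -> 0 < j -> j.-1 \in [seq i.-1 | i <- s & i != 0].
Proof. by move=> Hj lt0j; apply: map_f; rewrite mem_filter Hj -lt0n lt0j. Qed.

Lemma wf_ren r m s c : (forall i, i \in fv s -> c <= i -> r (i - c) < m) ->
  wf (c + m) (ren r c s).
Proof.
elim: s c => [i|s IH|a IHa b IHb|s IH|s IH] c /= Hr.
- case: ltnP => /= [lt_ic|le_ci]; first lia.
  by move: (Hr i (mem_head _ _) le_ci); lia.
- rewrite -addSn; apply: IH => j Hj lt_cj.
  have -> : j - c.+1 = j.-1 - c by lia.
  by apply: Hr; [apply: mem_fv_binder Hj _ | ]; lia.
- by rewrite IHa ?IHb // => i Hi; apply: Hr; rewrite mem_cat Hi ?orbT.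
- rewrite -addSn; apply: IH => j Hj lt_cj.
  have -> : j - c.+1 = j.-1 - c by lia.
  by apply: Hr; [apply: mem_fv_binder Hj _ | ]; lia.
- exact: IH.
Qed.

Lemma wf_iter_lam k m x : wf k (iter m Lam x) = wf (k + m) x.
Proof. by elim: m k => [|m IH] k /=; rewrite ?addn0 // IH addSnnS. Qed.

Lemma wf_close xs u : {subset fv u <= xs} -> wf 0 (close xs u).
Proof.
move=> sub_u; rewrite /close wf_iter_lam -[size xs]add0n.
apply: wf_ren => i /sub_u Hi _; rewrite add0n.
have : 0 < size xs by case: xs Hi {sub_u}.
lia.
Qed.

Lemma sim_iter_lam m a b : sim a b -> sim (iter m Lam a) (iter m Lam b).
Proof. by move=> Hab; elim: m => //= m IH; apply: sim_lam. Qed.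

Theorem lemma19 (t : term) :
  open_approx t (Shift (App (Var 0) (tlift 1 0 t))).
Proof.
rewrite /open_approx; set xs := sort leq _.
have sub_xs u : {subset fv u <= fv t ++ fv (shift_elim t)} -> {subset fv u <= xs}.
  by move=> sub_u i /sub_u; rewrite /xs mem_sort mem_undup.
exists sim_envrel; split; first exact: sim_envrel_bisim.
split=> //; try (apply/wf_close/sub_xs => i Hi; rewrite mem_cat Hi ?orbT //).
apply/sim_sim_upto/sim_iter_lam; rewrite /= ren_tlift1.
exact/sim_elim/sim_refl.
Qed.
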